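(* Let $\Gamma$ be a nilpotent group, let $r\ge1$, and for each $j=1,\ldots,r$ let $x^{(j)}_1,\ldots,x^{(j)}_{m_j}$ be elements of $\Gamma$, regarded as distinct letters. Let $\alpha$ be a commutator form of weight $r$. Then there exist formal commutators $\eta_1,\ldots,\eta_t$ in the letters $x^{(j)}_i$ with the following properties. (i) In $\Gamma$, $\alpha\big(\prod_{i=1}^{m_1}x^{(1)}_i,\ldots,\prod_{i=1}^{m_r}x^{(r)}_i\big)=\eta_1\cdots\eta_t$. (ii) For each tuple $(i_1,\ldots,i_r)$ with $i_j\in[1,m_j]$ there is some $\eta_l$ equal to $\alpha(x^{(1)}_{i_1},\ldots,x^{(r)}_{i_r})$. (iii) For every $l\in[1,t]$ and every $j\in[1,r]$ there is at least one $i\in[1,m_j]$ with $x^{(j)}_i\sqsubset\eta_l$. (iv) The $\eta_l$ are pairwise distinct as formal commutators in the $x^{(j)}_i$. (v) If $\eta_l$ is not of the form $\alpha(x^{(1)}_{i_1},\ldots,x^{(r)}_{i_r})$ then $\eta_l$ has total weight greater than $r$.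
   Context: $[u,v]=u^{-1}v^{-1}uv$. Formal commutators in letters: each letter is one, and $[\beta,\beta']$ is one whenever $\beta,\beta'$ are; they are interpreted as group elements in the obvious way. The total weight of a formal commutator is the number of letter occurrences in it (weight 1 for a letter, and weights add under bracketing). Components: $C(x)=\{x\}$ for a letter, $C([\beta,\beta'])=C(\beta)\cup C(\beta')\cup\{[\beta,\beta']\}$; $\beta\sqsubset\gamma$ means $\beta\in C(\gamma)$. A commutator form of weight $n$ is a map sending an $n$-tuple of letters to a formal commutator, defined recursively: the unique form of weight 1 is $x\mapsto x$; a form of weight $n\ge2$ is any map $\gamma(y_1,\ldots,y_n)=[\gamma_1(y_{\sigma(1)},\ldots,y_{\sigma(n_1)}),\gamma_2(y_{\sigma(n_1+1)},\ldots,y_{\sigma(n)})]$ where $\gamma_1,\gamma_2$ are forms of weights $n_1,n-n_1\ge1$ and $\sigma\in S_n$. Applied to group elements, a form gives a group element. *)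

From HB Require Import structures.
From mathcomp Require Import all_boot.
From mathcomp Require Import monoid perm.

Set Implicit Arguments.
Unset Strict Implicit.
Unset Printing Implicit Defensive.

Local Open Scope group_scope.

Section Nilpotent.
Variable G : groupType.

Inductive gen_subgroup (S : G -> Prop) : G -> Prop :=
  | gen_in  x : S x -> gen_subgroup S x
  | gen_one : gen_subgroup S 1
  | gen_mul x y : gen_subgroup S x -> gen_subgroup S y -> gen_subgroup S (x * y)
  | gen_inv x : gen_subgroup S x -> gen_subgroup S x^-1.

(** lower central series: lcs 0 = G (= gamma_1), lcs (k+1) = [lcs k, G] *)
Fixpoint lcs (k : nat) : G -> Prop :=
  match k with
  | 0 => fun _ => True
  | k'.+1 => gen_subgroup (fun g => exists a b, lcs k' a /\ g = commg a b)
  end.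

Definition nilpotent_group : Prop :=
  exists c : nat, forall g, lcs c g -> g = 1.
End Nilpotent.

Inductive fcomm (L : Type) : Type :=
  | Letter of L
  | Comm of fcomm L & fcomm L.
Arguments Letter {L}.
Arguments Comm {L}.

Fixpoint fc_eval (L : Type) (G : groupType) (v : L -> G) (b : fcomm L) : G :=
  match b with
  | Letter x => v x
  | Comm b1 b2 => commg (fc_eval v b1) (fc_eval v b2)
  end.

Fixpoint fc_weight (L : Type) (b : fcomm L) : nat :=
  match b with
  | Letter _ => 1
  | Comm b1 b2 => fc_weight b1 + fc_weight b2
  end.

(** components: b ⊏ g  iff  b ∈ C(g) *)
Fixpoint fc_sub (L : Type) (b g : fcomm L) : Prop :=
  match g with
  | Letter x => b = Letter x
  | Comm g1 g2 => fc_sub b g1 \/ fc_sub b g2 \/ b = Comm g1 g2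
  end.

Fixpoint fc_map (L L' : Type) (f : L -> L') (b : fcomm L) : fcomm L' :=
  match b with
  | Letter x => Letter (f x)
  | Comm b1 b2 => Comm (fc_map f b1) (fc_map f b2)
  end.

(** A form of weight n is represented by the formal commutator
    gamma(y_0,...,y_{n-1}) in placeholder letters 0..n-1 (nat);
    applying it to an n-tuple y of letters substitutes y_k for k.
    The predicate [comm_form n g] follows the recursive definition:
    weight 1: y_0; weight n >= 2:
    [gamma1(y_{s(0)},...,y_{s(n1-1)}), gamma2(y_{s(n1)},...,y_{s(n-1)})]
    with gamma1, gamma2 forms of weights n1, n-n1 >= 1 and s in S_n. *)

Definition perm_nat (n : nat) (s : 'S_n) (k : nat) : nat :=
  match @insub nat (fun k => k < n) 'I_n k with
  | Some i => val (s i)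
  | None => k
  end.

Inductive comm_form : nat -> fcomm nat -> Prop :=
  | form_one : comm_form 1 (Letter 0)
  | form_comm n1 n2 g1 g2 (s : 'S_(n1 + n2)) :
      0 < n1 -> 0 < n2 ->
      comm_form n1 g1 -> comm_form n2 g2 ->
      comm_form (n1 + n2)
        (Comm (fc_map (perm_nat s) g1)
              (fc_map (fun k => perm_nat s (n1 + k)) g2)).

Definition form_apply (L : Type) (g : fcomm nat) (y : nat -> L) : fcomm L :=
  fc_map y g.

Definition gprod (G : groupType) (s : seq G) : G := foldr mul 1 s.

Fixpoint fc_all (L : Type) (P : L -> Prop) (b : fcomm L) : Prop :=
  match b with
  | Letter x => P x
  | Comm b1 b2 => fc_all P b1 /\ fc_all P b2
  end.

From HB Require Import structures.
From mathcomp Require Import all_boot.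
From mathcomp Require Import monoid perm zify.

Set Implicit Arguments.
Unset Strict Implicit.
Unset Printing Implicit Defensive.

Local Open Scope group_scope.

(* If alpha = [gamma1, gamma2], the two sides
   are already expanded as products U = u_1 ... u_p and W = w_1 ... w_q of
   formal commutators, and the identities
     [c, aX] = [c, X] [c, a] [c, a, X],   [uY, Z] = [u, Z]^Y [Y, Z],   t^Y = t [t, Y]
   rewrite [prod U, prod W] exactly as the product of the left-normed
   commutators [u_k, w_{i_1}, ..., w_{i_a}, u_{k_1}, ..., u_{k_b}], indexed by
   the nonempty subsequences of W and the subsequences of the u's that follow
   u_k.  Since the letters of U and W come from disjoint positions, such a term
   determines u_k and both subsequences, which gives (iv); it is either
   [u_k, w_i] or strictly heavier than u_k and w_i together, which gives (v). *)

Fixpoint fc_eqb (L : eqType) (a b : fcomm L) : bool :=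
  match a, b with
  | Letter x, Letter y => x == y
  | Comm a1 a2, Comm b1 b2 => fc_eqb a1 b1 && fc_eqb a2 b2
  | _, _ => false
  end.

Lemma fc_eqP (L : eqType) : Equality.axiom (@fc_eqb L).
Proof.
elim=> [x|a1 IH1 a2 IH2] [y|b1 b2] /=; try by constructor.
  by apply: (iffP eqP) => [->|[]].
apply: (iffP andP) => [[/IH1 -> /IH2 ->] //|[<- <-]].
by split; [apply/IH1|apply/IH2].
Qed.

HB.instance Definition _ (L : eqType) := hasDecEq.Build (fcomm L) (@fc_eqP L).

Section FormalCommutators.
Variable L : Type.
Implicit Types (t u : fcomm L) (P Q : L -> Prop).

Lemma fc_weight_gt0 t : (0 < fc_weight t)%N.
Proof. by elim: t => //= t1 IH1 t2 _; rewrite addn_gt0 IH1. Qed.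

Lemma fc_sub_refl t : fc_sub t t.
Proof. by case: t => [x|t1 t2] /=; auto. Qed.

Lemma fc_sub_trans t1 t2 t3 : fc_sub t1 t2 -> fc_sub t2 t3 -> fc_sub t1 t3.
Proof.
move=> h12; elim: t3 => [y|u1 IH1 u2 IH2] /= => [e|[h|[h|e]]].
- by rewrite e in h12.
- by left; apply: IH1.
- by right; left; apply: IH2.
by rewrite e in h12.
Qed.

Lemma eq_fc_eval (G : groupType) (w w' : L -> G) t : w =1 w' -> fc_eval w t = fc_eval w' t.
Proof. by move=> ww'; elim: t => //= t1 -> t2 ->. Qed.

Lemma fc_all_impl P Q t : (forall y, P y -> Q y) -> fc_all P t -> fc_all Q t.
Proof. by move=> PQ; elim: t => [y|t1 IH1 t2 IH2] /=; [apply: PQ|case; split; auto]. Qed.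

Lemma fc_all_disjoint P Q t :
  (forall y, P y -> Q y -> False) -> fc_all P t -> fc_all Q t -> False.
Proof. by move=> PQ; elim: t => [y|t1 IH1 t2 _] /=; [apply: PQ|move=> [+ _] [+ _]]. Qed.

End FormalCommutators.

Section Renaming.
Variables (A B : Type) (f : A -> B).

Lemma fc_eval_map (G : groupType) (w : B -> G) t :
  fc_eval w (fc_map f t) = fc_eval (w \o f) t.
Proof. by elim: t => //= t1 -> t2 ->. Qed.

Lemma fc_map_comp (C : Type) (h : B -> C) t :
  fc_map h (fc_map f t) = fc_map (h \o f) t.
Proof. by elim: t => //= t1 -> t2 ->. Qed.

Lemma fc_weight_map t : fc_weight (fc_map f t) = fc_weight t.
Proof. by elim: t => //= t1 -> t2 ->. Qed.

Lemma fc_all_map (P : B -> Prop) t : fc_all (P \o f) t -> fc_all P (fc_map f t).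
Proof. by elim: t => //= t1 IH1 t2 IH2 [/IH1 ? /IH2 ?]. Qed.

Lemma eq_in_fc_map (P : A -> Prop) (f' : A -> B) t :
  (forall y, P y -> f y = f' y) -> fc_all P t -> fc_map f t = fc_map f' t.
Proof. by move=> ff'; elim: t => [y /ff' /= ->|t1 IH1 t2 IH2 [/IH1 /= -> /IH2 ->]]. Qed.

End Renaming.

Section LeftNormed.
Variable L : eqType.
Implicit Types (c u : fcomm L) (s : seq (fcomm L)).

Definition lcomm c s : fcomm L := foldl Comm c s.

Lemma lcomm_cat c s1 s2 : lcomm c (s1 ++ s2) = lcomm (lcomm c s1) s2.
Proof. exact: foldl_cat. Qed.

Lemma lcomm_rcons c s t : lcomm c (rcons s t) = Comm (lcomm c s) t.
Proof. exact: foldl_rcons. Qed.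

Lemma fc_all_lcomm (P : L -> Prop) c s :
  fc_all P (lcomm c s) <-> fc_all P c /\ {in s, forall t, fc_all P t}.
Proof.
elim: s c => [|t s IH] c /=; first by split=> // [[]].
split=> [/IH [[Pc Pt] Ps]|[Pc Pts]].
  by split=> // y; rewrite inE => /predU1P [->|/Ps].
apply/IH; split; first by split=> //; apply: Pts; rewrite mem_head.
by move=> y ys; apply: Pts; rewrite inE ys orbT.
Qed.

Lemma fc_weight_lcomm c s :
  fc_weight (lcomm c s) = (fc_weight c + sumn [seq fc_weight t | t <- s])%N.
Proof. by elim: s c => [|t s IH] c /=; rewrite ?addn0 // IH addnA. Qed.

Lemma fc_sub_lcomm c s : fc_sub c (lcomm c s).
Proof.
elim/last_ind: s => [|s t IH]; first exact: fc_sub_refl.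
by rewrite lcomm_rcons /=; left.
Qed.

Lemma fc_sub_lcomm_arg c s t : t \in s -> fc_sub t (lcomm c s).
Proof.
case/splitPr=> s1 s2; rewrite lcomm_cat /= -/(lcomm _ s2).
apply: fc_sub_trans (fc_sub_lcomm _ _) => /=; right; left; exact: fc_sub_refl.
Qed.

End LeftNormed.

Section NonemptySubsequences.
Variable A : eqType.
Implicit Types (s a : seq A).

Fixpoint nesubseqs s : seq (seq A) :=
  if s is x :: s' then nesubseqs s' ++ [:: x] :: map (cons x) (nesubseqs s')
  else [::].

Lemma mem_nesubseqs s a : a \in nesubseqs s -> a != [::] /\ {subset a <= s}.
Proof.
elim: s a => [|x s IH] a //=; rewrite mem_cat inE => /orP [/IH [a0 sas]|/predU1P [->|]].
- by split=> // y /sas; rewrite inE orbC => ->.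
- by split=> // y; rewrite inE => /eqP ->; rewrite mem_head.
case/mapP=> b /IH [_ sbs] ->; split=> // y.
by rewrite !inE => /predU1P [->|/sbs ->]; rewrite ?eqxx ?orbT.
Qed.

Lemma nesubseqs1 s x : x \in s -> [:: x] \in nesubseqs s.
Proof.
elim: s => [|y s IH] //=; rewrite inE mem_cat inE => /predU1P [->|/IH ->] //.
by rewrite eqxx orbT.
Qed.

Lemma nesubseqs_uniq s : uniq s -> uniq (nesubseqs s).
Proof.
elim: s => [|x s IH] //= /andP [xs /IH uns].
have xNns a : a \in nesubseqs s -> x \in a -> False.
  by move=> /mem_nesubseqs [_ sas] /sas; apply/negP.
rewrite cat_uniq uns /= map_inj_uniq ?uns ?andbT; last by move=> ? ? [].
rewrite negb_or -andbA; apply/and3P; split.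
- by apply/negP => /xNns; apply; rewrite mem_head.
- apply/hasPn => _ /mapP [b _ ->]; apply/negP => /xNns; apply.
  by rewrite mem_head.
by apply/mapP => -[b /mem_nesubseqs [b0 _] [eb]]; rewrite -eb in b0.
Qed.

End NonemptySubsequences.

Section CommutatorIdentities.
Variable G : groupType.
Implicit Types x y z : G.

Lemma conjg_mulR x y : x ^ y = x * [~ x, y].
Proof. by rewrite mulVKg. Qed.

Lemma commMgJ x y z : [~ x * y, z] = [~ x, z] ^ y * [~ y, z].
Proof. by rewrite !commgEr conjgM mulgA -conjMg mulgK. Qed.

Lemma commgMJ x y z : [~ x, y * z] = [~ x, z] * [~ x, y] ^ z.
Proof. by rewrite !commgEl conjgM -mulgA -conjMg mulVKg. Qed.

Lemma commgMR x y z : [~ x, y * z] = [~ x, z] * [~ x, y] * [~ x, y, z].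
Proof. by rewrite commgMJ conjg_mulR mulgA. Qed.

Lemma gprodE (s : seq G) : gprod s = \prod_(y <- s) y.
Proof. by elim: s => [|y s IH]; rewrite ?big_nil ?big_cons //= IH. Qed.

End CommutatorIdentities.

Section CommExpansion.
Variable L : eqType.
Implicit Types (u c : fcomm L) (U W : seq (fcomm L)).

Fixpoint comm_expansion U W : seq (fcomm L) :=
  if U is u :: U' then
    [seq lcomm u (a ++ b) | a <- nesubseqs W, b <- [::] :: nesubseqs U']
      ++ comm_expansion U' W
  else [::].

Lemma comm_expansion_cons u U W : comm_expansion (u :: U) W =
  [seq lcomm u (a ++ b) | a <- nesubseqs W, b <- [::] :: nesubseqs U]
    ++ comm_expansion U W.
Proof. by []. Qed.

Lemma comm_expansionP U W e : e \in comm_expansion U W -> exists u a b,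
  [/\ u \in U, a \in nesubseqs W, {subset b <= U} & e = lcomm u (a ++ b)].
Proof.
elim: U => [|u U IH] //; rewrite comm_expansion_cons mem_cat.
case/orP=> [/allpairsP [[a b] /= [Wa Ub ->]]|].
  exists u, a, b; split=> //; first exact: mem_head.
  move: Ub; rewrite inE => /predU1P [-> //|/mem_nesubseqs [_ sbU] t /sbU].
  by rewrite inE orbC => ->.
case/IH=> u' [a [b [Uu' Wa sbU ->]]]; exists u', a, b.
by split=> // [|t /sbU]; rewrite inE ?Uu' ?orbT // orbC => ->.
Qed.

Lemma Comm_comm_expansion U W u w :
  u \in U -> w \in W -> Comm u w \in comm_expansion U W.
Proof.
move=> + Ww; elim: U => [|u' U IH] //.
rewrite comm_expansion_cons inE mem_cat => /predU1P [->|/IH ->]; last by rewrite orbT.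
by apply/orP; left; apply/allpairsP; exists ([:: w], [::]); rewrite /= nesubseqs1 ?mem_head.
Qed.

Lemma fc_all_comm_expansion (P : L -> Prop) U W e :
  {in U, forall u, fc_all P u} -> {in W, forall w, fc_all P w} ->
  e \in comm_expansion U W -> fc_all P e.
Proof.
move=> PU PW /comm_expansionP [u [a [b [Uu /mem_nesubseqs [_ sbW] sbU ->]]]].
apply/fc_all_lcomm; split=> [|t]; first exact: PU.
by rewrite mem_cat => /orP [/sbW /PW|/sbU /PU].
Qed.

Lemma comm_expansion_cases U W e : e \in comm_expansion U W -> exists u w,
  [/\ u \in U, w \in W, fc_sub u e, fc_sub w e &
      e = Comm u w \/ (fc_weight u + fc_weight w < fc_weight e)%N].
Proof.
case/comm_expansionP=> u [[|w a] [b [Uu /mem_nesubseqs [// _ sbW] _ ->]]].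
exists u, w; split=> //; first by apply: sbW; rewrite mem_head.
- exact: fc_sub_lcomm.
- by apply: fc_sub_lcomm_arg; rewrite mem_head.
rewrite cat_cons; case: (a ++ b) => [|t s]; [by left|right].
by rewrite fc_weight_lcomm /= addnA -[X in (X < _)%N]addn0 ltn_add2l addn_gt0 fc_weight_gt0.
Qed.

End CommExpansion.

Section Evaluation.
Variables (L : eqType) (G : groupType) (v : L -> G).
Local Notation ev := (fc_eval v).

Lemma prod_lcomm_nesubseqs c V :
  \prod_(a <- nesubseqs V) ev (lcomm c a) = [~ ev c, \prod_(t <- V) ev t].
Proof.
elim: V c => [|t V IH] c; first by rewrite big_nil big_nil commg1.
rewrite /= big_cat big_cons big_map [in RHS]big_cons commgMR (IH c).
by rewrite -(IH (Comm c t)) -mulgA.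
Qed.

Lemma prod_comm_expansion U W :
  \prod_(e <- comm_expansion U W) ev e = [~ \prod_(u <- U) ev u, \prod_(w <- W) ev w].
Proof.
elim: U => [|u U IH]; first by rewrite !big_nil comm1g.
rewrite comm_expansion_cons big_cat big_allpairs_dep IH big_cons commMgJ.
rewrite -prod_lcomm_nesubseqs conjg_prod.
congr (_ * _); apply: eq_bigr => a _.
by rewrite big_cons cats0 conjg_mulR -prod_lcomm_nesubseqs; under eq_bigr do rewrite lcomm_cat.
Qed.

End Evaluation.

Section Uniqueness.
Variables (L : eqType) (Q1 Q2 : L -> Prop).
Hypothesis Q12 : forall y, Q1 y -> Q2 y -> False.
Implicit Types (u t : fcomm L) (s a b : seq (fcomm L)) (U W : seq (fcomm L)).

Lemma lcomm_neq u1 u2 t s : fc_all Q1 u1 -> fc_all Q2 t -> u1 <> lcomm u2 (t :: s).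
Proof.
move=> Q1u1 Q2t e; move: Q1u1; rewrite e => /fc_all_lcomm [_ /(_ t (mem_head _ _))].
by move/(fc_all_disjoint Q12); apply.
Qed.

(* [u] is recovered as the left subterm just below the first argument whose
   letters satisfy [Q2]. *)
Lemma lcomm_cons_inj u1 u2 t1 t2 s1 s2 :
  fc_all Q1 u1 -> fc_all Q1 u2 -> fc_all Q2 t1 -> fc_all Q2 t2 ->
  lcomm u1 (t1 :: s1) = lcomm u2 (t2 :: s2) -> [/\ u1 = u2, t1 = t2 & s1 = s2].
Proof.
move=> Q1u1 Q1u2 Q2t1 Q2t2.
elim/last_ind: s1 s2 => [|s1 z1 IH] s2; case/lastP: s2 => [|s2 z2];
  rewrite -?rcons_cons ?lcomm_rcons.
- by case=> -> ->.
- by case=> /(lcomm_neq Q1u1 Q2t2).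
- by case=> /esym /(lcomm_neq Q1u2 Q2t1).
by case=> /IH [-> -> ->] ->.
Qed.

Lemma cat_disjoint_inj a1 a2 b1 b2 :
  {in a1, forall t, fc_all Q2 t} -> {in a2, forall t, fc_all Q2 t} ->
  {in b1, forall t, fc_all Q1 t} -> {in b2, forall t, fc_all Q1 t} ->
  a1 ++ b1 = a2 ++ b2 -> a1 = a2 /\ b1 = b2.
Proof.
move=> + + Q1b1 Q1b2; elim: a1 a2 => [|t1 a1 IH] [|t2 a2] //= Q2a1 Q2a2 e.
- case: (fc_all_disjoint Q12 (t := t2)); first by apply: Q1b1; rewrite e mem_head.
  by apply: Q2a2; rewrite mem_head.
- case: (fc_all_disjoint Q12 (t := t1)); first by apply: Q1b2; rewrite -e mem_head.
  by apply: Q2a1; rewrite mem_head.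
case: e => <- /IH [] // => [t ta|t ta|-> ->] //; [apply: Q2a1|apply: Q2a2];
  by rewrite in_cons ta orbT.
Qed.

Lemma lcomm_cat_inj u1 u2 a1 a2 b1 b2 :
  fc_all Q1 u1 -> fc_all Q1 u2 -> a1 != [::] -> a2 != [::] ->
  {in a1, forall t, fc_all Q2 t} -> {in a2, forall t, fc_all Q2 t} ->
  {in b1, forall t, fc_all Q1 t} -> {in b2, forall t, fc_all Q1 t} ->
  lcomm u1 (a1 ++ b1) = lcomm u2 (a2 ++ b2) -> [/\ u1 = u2, a1 = a2 & b1 = b2].
Proof.
case: a1 a2 => [|t1 a1] [|t2 a2] // Q1u1 Q1u2 _ _ Q2a1 Q2a2 Q1b1 Q1b2.
have Q2t1 : fc_all Q2 t1 by apply: Q2a1; rewrite mem_head.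
have Q2t2 : fc_all Q2 t2 by apply: Q2a2; rewrite mem_head.
case/(lcomm_cons_inj Q1u1 Q1u2 Q2t1 Q2t2) => -> -> /cat_disjoint_inj [] //.
- by move=> t ta; apply: Q2a1; rewrite in_cons ta orbT.
- by move=> t ta; apply: Q2a2; rewrite in_cons ta orbT.
by move=> -> ->.
Qed.

Lemma comm_expansion_uniq U W :
  {in U, forall u, fc_all Q1 u} -> {in W, forall w, fc_all Q2 w} ->
  uniq U -> uniq W -> uniq (comm_expansion U W).
Proof.
move=> + Q2W + uW; elim: U => [|u U IH] // Q1U /andP [uU uniqU].
have Q1u : fc_all Q1 u by apply: Q1U; rewrite mem_head.
have {}Q1U : {in U, forall u, fc_all Q1 u}.
  by move=> t Ut; apply: Q1U; rewrite in_cons Ut orbT.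
have nsW a : a \in nesubseqs W -> a != [::] /\ {in a, forall t, fc_all Q2 t}.
  by case/mem_nesubseqs=> a0 saW; split=> // t /saW /Q2W.
have nsU b : b \in [::] :: nesubseqs U -> {in b, forall t, fc_all Q1 t}.
  by rewrite inE => /predU1P [-> //|/mem_nesubseqs [_ sbU] t /sbU /Q1U].
rewrite comm_expansion_cons cat_uniq IH // andbT; apply/andP; split.
  apply: allpairs_uniq => [|/=|p1 p2]; first exact: nesubseqs_uniq.
    by rewrite nesubseqs_uniq // andbT; apply/negP => /mem_nesubseqs [].
  move=> /allpairsP [[a1 b1] [/nsW [a10 Q2a1] /nsU Q1b1 ->]].
  move=> /allpairsP [[a2 b2] [/nsW [a20 Q2a2] /nsU Q1b2 ->]] /= e.
  by case: (lcomm_cat_inj Q1u Q1u a10 a20 Q2a1 Q2a2 Q1b1 Q1b2 e) => _ /= -> ->.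
apply/hasPn => _ /comm_expansionP [u' [a [b [Uu' /nsW [a0 Q2a] sbU ->]]]].
apply/negP => /allpairsP [[a' b'] [/nsW [a'0 Q2a'] /nsU Q1b' /= e]].
have Q1b : {in b, forall t, fc_all Q1 t} by move=> t /sbU /Q1U.
have [eu _ _] := lcomm_cat_inj (Q1U _ Uu') Q1u a0 a'0 Q2a Q2a' Q1b Q1b' e.
by move: uU; rewrite -eu Uu'.
Qed.

End Uniqueness.

Lemma perm_natE n (s : 'S_n) (i : 'I_n) : perm_nat s i = s i.
Proof. by rewrite /perm_nat valK. Qed.

Section PermNat.
Variables (n : nat) (s : 'S_n).

Lemma perm_nat_lt k : (k < n)%N -> (perm_nat s k < n)%N.
Proof. by move=> lt_kn; rewrite -[k]/(val (Ordinal lt_kn)) perm_natE. Qed.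

Lemma perm_natK k : (k < n)%N -> perm_nat s^-1 (perm_nat s k) = k.
Proof. by move=> lt_kn; rewrite -[k]/(val (Ordinal lt_kn)) !perm_natE permK. Qed.

Lemma perm_natKV k : (k < n)%N -> perm_nat s (perm_nat s^-1 k) = k.
Proof. by move=> lt_kn; rewrite -[k]/(val (Ordinal lt_kn)) !perm_natE permKV. Qed.

Lemma perm_nat_inj k1 k2 : (k1 < n)%N -> (k2 < n)%N ->
  perm_nat s k1 = perm_nat s k2 -> k1 = k2.
Proof. by move=> lt1 lt2 /(congr1 (perm_nat s^-1)); rewrite !perm_natK. Qed.

End PermNat.

Lemma perm_nat_split n1 n2 (s : 'S_(n1 + n2)) k : (k < n1 + n2)%N ->
  (exists2 k1, k1 < n1 & k = perm_nat s k1)%N \/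
  (exists2 k2, k2 < n2 & k = perm_nat s (n1 + k2))%N.
Proof.
move=> lt_k; case: (ltnP (perm_nat s^-1 k) n1) => [lt1|le1]; [left|right].
  by exists (perm_nat s^-1 k); rewrite ?perm_natKV.
exists (perm_nat s^-1 k - n1)%N; first by rewrite ltn_subLR ?perm_nat_lt.
by rewrite subnKC // perm_natKV.
Qed.

Lemma comm_form_weight n g : comm_form n g -> fc_weight g = n.
Proof. by elim=> //= n1 n2 g1 g2 s _ _ _ w1 _ w2; rewrite !fc_weight_map w1 w2. Qed.

Lemma comm_form_letters n g : comm_form n g -> fc_all (fun k => k < n)%N g.
Proof.
elim=> //= n1 n2 g1 g2 s _ _ _ a1 _ a2; split; apply: fc_all_map.
  by apply: fc_all_impl a1 => k lt_k; apply: perm_nat_lt; rewrite ltn_addr.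
by apply: fc_all_impl a2 => k lt_k; apply: perm_nat_lt; rewrite ltn_add2l.
Qed.

Section Expansion.
Variables (L : eqType) (G : groupType) (v : L -> G).
Implicit Types (ls : nat -> seq L) (g : fcomm nat) (E : seq (fcomm L)).

Definition is_choice ls n (c : nat -> L) := forall k, (k < n)%N -> c k \in ls k.

Definition disjoint_families ls n := forall k1 k2 y,
  (k1 < n)%N -> (k2 < n)%N -> y \in ls k1 -> y \in ls k2 -> k1 = k2.

(* The inductive invariant: [g] is a form of weight [n] whose position [k] is
   filled with the product of the letters [ls k]; a choice function picks the
   tuple (i_1, ..., i_n) of the theorem, and the fields are conditions (i)-(v). *)
Record expansion n g ls E : Prop := Expansion {
  expansion_letters :
    {in E, forall e, fc_all (fun y => exists2 k, k < n & y \in ls k)%N e};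
  expansion_eval :
    fc_eval (fun k => \prod_(y <- ls k) v y) g = \prod_(e <- E) fc_eval v e;
  expansion_instances : forall c, is_choice ls n c -> fc_map c g \in E;
  expansion_sub : forall e k, e \in E -> (k < n)%N ->
    exists2 y, y \in ls k & fc_sub (Letter y) e;
  expansion_uniq : uniq E;
  expansion_weight : {in E, forall e,
    (exists2 c, is_choice ls n c & e = fc_map c g) \/ (n < fc_weight e)%N}
}.

Lemma expansion_weight_ge n g ls E e :
  comm_form n g -> expansion n g ls E -> e \in E -> (n <= fc_weight e)%N.
Proof.
move=> form Eg /(expansion_weight Eg) [[c _ ->]|/ltnW //].
by rewrite fc_weight_map (comm_form_weight form).
Qed.

Lemma expansion_letter ls :
  uniq (ls 0%N) -> expansion 1 (Letter 0%N) ls [seq Letter y | y <- ls 0%N].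
Proof.
move=> uniq_ls0; split.
- by move=> _ /mapP [y ly ->]; exists 0%N.
- by rewrite big_map.
- by move=> c /(_ 0%N isT) ls0c; apply: map_f.
- by move=> _ [|k] /mapP [y ly ->] // _; exists y.
- by rewrite map_inj_uniq // => ? ? [].
by move=> _ /mapP [y ly ->]; left; exists (fun=> y) => // -[].
Qed.

Section CommStep.
Variables (n1 n2 : nat) (s : 'S_(n1 + n2)) (g1 g2 : fcomm nat).
Variables (ls : nat -> seq L) (E1 E2 : seq (fcomm L)).
Let ls1 k := ls (perm_nat s k).
Let ls2 k := ls (perm_nat s (n1 + k)).
Let g := Comm (fc_map (perm_nat s) g1) (fc_map (fun k => perm_nat s (n1 + k)) g2).
Hypotheses (form1 : comm_form n1 g1) (form2 : comm_form n2 g2).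
Hypothesis disj : disjoint_families ls (n1 + n2).
Hypotheses (exp1 : expansion n1 g1 ls1 E1) (exp2 : expansion n2 g2 ls2 E2).

Let lt1 k : (k < n1)%N -> (k < n1 + n2)%N.
Proof. exact: ltn_addr. Qed.

Let lt2 k : (k < n2)%N -> (n1 + k < n1 + n2)%N.
Proof. by rewrite ltn_add2l. Qed.

Lemma disjoint_sides y :
  (exists2 k, k < n1 & y \in ls1 k)%N -> (exists2 k, k < n2 & y \in ls2 k)%N -> False.
Proof.
move=> [k1 lt_k1 y1] [k2 lt_k2 y2].
have := disj (perm_nat_lt s (lt1 lt_k1)) (perm_nat_lt s (lt2 lt_k2)) y1 y2.
by move=> /(perm_nat_inj (lt1 lt_k1) (lt2 lt_k2)) e; move: lt_k1; rewrite e ltnNge leq_addr.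
Qed.

Lemma is_choice_join c1 c2 : is_choice ls1 n1 c1 -> is_choice ls2 n2 c2 ->
  exists2 c, is_choice ls (n1 + n2) c & fc_map c g = Comm (fc_map c1 g1) (fc_map c2 g2).
Proof.
move=> ch1 ch2.
pose c j := let k := perm_nat s^-1 j in if (k < n1)%N then c1 k else c2 (k - n1)%N.
have cE1 k : (k < n1)%N -> c (perm_nat s k) = c1 k.
  by move=> lt_k; rewrite /c perm_natK ?lt1 // lt_k.
have cE2 k : (k < n2)%N -> c (perm_nat s (n1 + k)) = c2 k.
  by move=> lt_k; rewrite /c perm_natK ?lt2 // ltnNge leq_addr addKn.
exists c.
  move=> j /(perm_nat_split s) [[k lt_k ->]|[k lt_k ->]].
    by rewrite cE1 //; apply: ch1.
  by rewrite cE2 //; apply: ch2.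
rewrite /g /= !fc_map_comp; congr Comm.
  by apply: eq_in_fc_map (comm_form_letters form1) => k /cE1.
by apply: eq_in_fc_map (comm_form_letters form2) => k /cE2.
Qed.

Lemma expansion_comm : expansion (n1 + n2) g ls (comm_expansion E1 E2).
Proof.
split.
- move=> e; apply: fc_all_comm_expansion
    => [u /(expansion_letters exp1)|w /(expansion_letters exp2)];
    apply: fc_all_impl => y [k lt_k yk].
    by exists (perm_nat s k); rewrite ?perm_nat_lt ?lt1.
  by exists (perm_nat s (n1 + k)); rewrite ?perm_nat_lt ?lt2.
- by rewrite prod_comm_expansion -(expansion_eval exp1) -(expansion_eval exp2) /= !fc_eval_map.
- move=> c ch; rewrite /g /= !fc_map_comp.
  apply: Comm_comm_expansion;
    [apply: (expansion_instances exp1)|apply: (expansion_instances exp2)] => k lt_k.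
    exact/ch/perm_nat_lt/lt1.
  exact/ch/perm_nat_lt/lt2.
- move=> e k /comm_expansion_cases [u [w [E1u E2w ue we _]]].
  case/(perm_nat_split s) => [[k1 lt_k1 ->]|[k2 lt_k2 ->]].
    have [y ly yu] := expansion_sub exp1 E1u lt_k1.
    by exists y; last exact: fc_sub_trans ue.
  have [y ly yw] := expansion_sub exp2 E2w lt_k2.
  by exists y; last exact: fc_sub_trans we.
- exact: comm_expansion_uniq disjoint_sides _ _ (expansion_letters exp1)
    (expansion_letters exp2) (expansion_uniq exp1) (expansion_uniq exp2).
move=> e /comm_expansion_cases [u [w [E1u E2w _ _ e_uw]]].
have ge_u := expansion_weight_ge form1 exp1 E1u.
have ge_w := expansion_weight_ge form2 exp2 E2w.
case: e_uw => [->|lt_e]; last by right; lia.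
case: (expansion_weight exp1 E1u) => [[c1 ch1 eu]|lt_u]; last by right => /=; lia.
case: (expansion_weight exp2 E2w) => [[c2 ch2 ew]|lt_w]; last by right => /=; lia.
by left; have [c ch e_c] := is_choice_join ch1 ch2; exists c; rewrite // eu ew e_c.
Qed.

End CommStep.

Lemma comm_form_expansion n g ls : comm_form n g ->
  disjoint_families ls n -> (forall k, k < n -> uniq (ls k))%N ->
  exists E, expansion n g ls E.
Proof.
move=> form; elim: form ls => [|n1 n2 g1 g2 s _ _ form1 IH1 form2 IH2] ls disj uls.
  by exists [seq Letter y | y <- ls 0%N]; apply/expansion_letter/uls.
have lt1 k : (k < n1)%N -> (perm_nat s k < n1 + n2)%N.
  by move=> lt_k; rewrite perm_nat_lt ?ltn_addr.
have lt2 k : (k < n2)%N -> (perm_nat s (n1 + k) < n1 + n2)%N.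
  by move=> lt_k; rewrite perm_nat_lt ?ltn_add2l.
have [E1 exp1] : exists E, expansion n1 g1 (fun k => ls (perm_nat s k)) E.
  apply: IH1 => [k1 k2 y lt_k1 lt_k2 y1 y2|k /lt1 /uls //].
  apply: (@perm_nat_inj _ s); rewrite ?ltn_addr //.
  exact: disj (lt1 _ lt_k1) (lt1 _ lt_k2) y1 y2.
have [E2 exp2] : exists E, expansion n2 g2 (fun k => ls (perm_nat s (n1 + k))) E.
  apply: IH2 => [k1 k2 y lt_k1 lt_k2 y1 y2|k /lt2 /uls //].
  apply/(@addnI n1)/(@perm_nat_inj _ s); rewrite ?ltn_add2l //.
  exact: disj (lt2 _ lt_k1) (lt2 _ lt_k2) y1 y2.
by exists (comm_expansion E1 E2); apply: expansion_comm.
Qed.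

End Expansion.

Section Slots.
Variable m : nat -> nat.

Definition slot_letters j : seq (nat * nat) := [seq (j, i) | i <- iota 0 (m j)].

Lemma slot_lettersP j p : reflect (p.1 = j /\ (p.2 < m j)%N) (p \in slot_letters j).
Proof.
apply: (iffP mapP) => [[i + ->]|[<- lt_p]]; first by rewrite mem_iota.
by exists p.2; rewrite ?mem_iota // -surjective_pairing.
Qed.

Lemma slot_letters_uniq j : uniq (slot_letters j).
Proof. by rewrite map_inj_uniq ?iota_uniq // => ? ? []. Qed.

Lemma slot_letters_disjoint n : disjoint_families slot_letters n.
Proof. by move=> k1 k2 y _ _ /slot_lettersP [<- _] /slot_lettersP []. Qed.

Lemma is_choice_slots n (ii : nat -> nat) :
  (forall j, j < n -> ii j < m j)%N -> is_choice slot_letters n (fun j => (j, ii j)).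
Proof. by move=> lt_ii j /lt_ii lt_j; apply/slot_lettersP. Qed.

Lemma is_choice_slotsE n g c : comm_form n g -> is_choice slot_letters n c ->
  (forall j, j < n -> (c j).2 < m j)%N /\ fc_map c g = form_apply g (fun j => (j, (c j).2)).
Proof.
move=> form ch; have cE j : (j < n)%N -> (c j).1 = j /\ ((c j).2 < m j)%N.
  by move/ch/slot_lettersP.
split=> [j /cE [] //|]; apply: eq_in_fc_map (comm_form_letters form) => j /cE [ej _].
by rewrite -[X in (X, _)]ej -surjective_pairing.
Qed.

End Slots.

Unset Implicit Arguments.

Theorem propositionB2 (G : groupType) (hG : nilpotent_group G)
  (r : nat) (hr : (1 <= r)%N) (m : nat -> nat) (x : nat -> nat -> G)
  (alpha : fcomm nat) (halpha : comm_form r alpha) :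
  let v := fun l : nat * nat => x l.1 l.2 in
  let d := Letter (0%N, 0%N) in
  exists etas : seq (fcomm (nat * nat)),
    (forall l, (l < size etas)%N ->
       fc_all (fun p : nat * nat => (p.1 < r)%N /\ (p.2 < m p.1)%N)
              (nth d etas l)) /\
    fc_eval (fun k => gprod [seq x k i | i <- iota 0 (m k)]) alpha
      = gprod [seq fc_eval v e | e <- etas] /\
    (forall ii : nat -> nat, (forall j, (j < r)%N -> (ii j < m j)%N) ->
       exists l, (l < size etas)%N /\
         nth d etas l = form_apply alpha (fun j => (j, ii j))) /\
    (forall l j, (l < size etas)%N -> (j < r)%N ->
       exists i, (i < m j)%N /\ fc_sub (Letter (j, i)) (nth d etas l)) /\
    (forall l1 l2, (l1 < size etas)%N -> (l2 < size etas)%N -> l1 <> l2 ->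
       nth d etas l1 <> nth d etas l2) /\
    (forall l, (l < size etas)%N ->
       ~ (exists ii : nat -> nat, (forall j, (j < r)%N -> (ii j < m j)%N) /\
            nth d etas l = form_apply alpha (fun j => (j, ii j))) ->
       (r < fc_weight (nth d etas l))%N).
Proof.
move=> v d.
have [E expE] := comm_form_expansion v halpha (@slot_letters_disjoint m r)
  (fun k _ => @slot_letters_uniq m k).
exists E; split; [|split; [|split; [|split; [|split]]]].
- move=> l /(mem_nth d) /(expansion_letters expE); apply: fc_all_impl.
  by move=> p [k lt_k /slot_lettersP [-> lt_p]].
- rewrite gprodE big_map -(expansion_eval expE); apply: eq_fc_eval => k.
  by rewrite gprodE !big_map.
- move=> ii /is_choice_slots /(expansion_instances expE) Eii.
  by exists (index (form_apply alpha (fun j => (j, ii j))) E); rewrite index_mem nth_index.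
- move=> l j /(mem_nth d) El /(expansion_sub expE El) [[j' i] /slot_lettersP [/= -> lt_i] sub].
  by exists i.
- by move=> l1 l2 lt1 lt2 ne12 /eqP; rewrite nth_uniq ?(expansion_uniq expE) => // /eqP.
move=> l /(mem_nth d) /(expansion_weight expE) [[c ch ->]|//] no_ii; exfalso; apply: no_ii.
have [lt_c ->] := is_choice_slotsE halpha ch.
by exists (fun j => (c j).2).
Qed.
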